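(* Let $f:(0,\infty)\to(0,\infty)$ be continuous with $f\in\mathrm{RV}_0(\beta)$ for some $\beta>1$, let $F(x)=\int_x^1\frac{du}{f(u)}$ and $F^{-1}$ its inverse. Let $\varphi:(0,\infty)\to(0,\infty)$ be continuous and strictly increasing with $\varphi(x)\to0$ as $x\to0^+$ and $\lim_{x\to0^+}f(x)/\varphi(x)=1$. Let $\theta>0$ and let $\gamma:(0,\infty)\to(0,\infty)$ be continuous, strictly decreasing, with $\gamma\in\mathrm{RV}_\infty(-\theta)$ and $\gamma(t)\to0$ as $t\to\infty$. If \[ \lim_{t\to\infty}\frac{f(F^{-1}(t))}{\gamma(t)}=0, \] then \[ \lim_{t\to\infty}\frac{\varphi^{-1}(\gamma(t))}{t\,\gamma(t)}=0. \]
   Context: $\mathrm{RV}_0(\beta)$: measurable positive $\varphi$ on $(0,\infty)$ with $\varphi(\lambda x)/\varphi(x)\to\lambda^\beta$ as $x\to0^+$ for every $\lambda>0$. $\mathrm{RV}_\infty(\alpha)$: measurable positive $h$ with $h(\lambda t)/h(t)\to\lambda^\alpha$ as $t\to\infty$ for every $\lambda>0$. *)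

From Stdlib Require Import Reals Lra.
Open Scope R_scope.

Definition lim_0plus (g : R -> R) (l : R) : Prop :=
  forall eps, 0 < eps -> exists d, 0 < d /\
    forall x, 0 < x < d -> Rabs (g x - l) < eps.

Definition lim_infty (g : R -> R) (l : R) : Prop :=
  forall eps, 0 < eps -> exists M, forall t, M < t -> Rabs (g t - l) < eps.

Definition RV0 (phi : R -> R) (beta : R) : Prop :=
  (forall x, 0 < x -> 0 < phi x) /\
  forall lam, 0 < lam -> lim_0plus (fun x => phi (lam * x) / phi x) (Rpower lam beta).

Definition RVinf (h : R -> R) (alpha : R) : Prop :=
  (forall t, 0 < t -> 0 < h t) /\
  forall lam, 0 < lam -> lim_infty (fun t => h (lam * t) / h t) (Rpower lam alpha).

Definition is_F (f F : R -> R) : Prop :=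
  forall x, 0 < x ->
    exists pr : Riemann_integrable (fun u => / f u) x 1, F x = RiemannInt pr.

From Stdlib Require Import Reals Lra.
From Coquelicot Require Import Coquelicot.
Open Scope R_scope.

(* Since beta > 1, regular variation gives
   c f(z) <= f(z/2) <= f(z)/2 near 0 for some c > 0, and f ~ phi gives
   phi/2 < f < 3 phi/2 near 0; in particular f is "quasi-increasing"
   (f(u) <= 3 f(z) for u <= z).  Hence each dyadic block [2^-(k+1) y, 2^-k y]
   contributes at least y / (6 f y) to the integral, so
   int_{2^-K y}^y du/f(u) >= K y / (6 f y)                        (dyadic_lower).
   Given K, take t large, y = phi^-1(gamma t) and x = F^-1(t).  The hypothesis
   f(x) = o(gamma t) = o(phi y) together with c^K f(y) <= f(2^-K y) and
   quasi-monotonicity forces x < 2^-K y, hence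
   t = F(x) >= K y / (6 f y) >= K y / (9 gamma t),
   i.e. phi^-1(gamma t) / (t gamma t) <= 9 / K.  Only
   positivity of gamma and gamma(t) -> 0 are needed. *)

Lemma ivt_strict (G : R -> R) (a b v : R) :
  (forall u, a <= u <= b -> continuity_pt G u) -> a < b -> G a < v -> v < G b ->
  exists z, a <= z <= b /\ G z = v.
Proof.
  intros hcont hab hav hvb.
  destruct (Ranalysis5.IVT_interv (fun u => G u - v) a b) as [z [hz hGz]];
    try lra.
  - intros u hu. apply (continuity_pt_minus G (fun _ => v)); auto.
    apply continuity_pt_const. intros p q; reflexivity.
  - exists z. split; [exact hz | lra].
Qed.

Lemma Rdiv_lt_iff (a b c : R) : 0 < b -> (a / b < c <-> a < c * b).
Proof.
  intros hb. split; intros h.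
  - apply (Rmult_lt_compat_r b) in h; auto.
    unfold Rdiv in h. rewrite Rmult_assoc, Rinv_l, Rmult_1_r in h; lra.
  - apply (Rmult_lt_reg_r b); auto.
    unfold Rdiv. rewrite Rmult_assoc, Rinv_l, Rmult_1_r; lra.
Qed.

Lemma lim_infty_0_eventually_lt (h : R -> R) (e : R) :
  lim_infty h 0 -> 0 < e -> exists M, forall t, M < t -> h t < e.
Proof.
  intros hlim he. destruct (hlim e he) as [M hM]. exists M.
  intros t ht. specialize (hM t ht). apply Rabs_def2 in hM. lra.
Qed.

Lemma small_values_attained (phi : R -> R) (b s : R) :
  (forall x, 0 < x -> continuity_pt phi x) -> lim_0plus phi 0 ->
  0 < b -> 0 < s < phi b -> exists y, 0 < y <= b /\ phi y = s.
Proof.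
  intros hcont hlim hb hs.
  destruct (hlim s (proj1 hs)) as [delta [hdelta hsmall]].
  set (a := Rmin (delta / 2) (b / 2)).
  assert (ha : 0 < a /\ a < delta /\ a < b).
  { assert (Rmin (delta / 2) (b / 2) <= delta / 2) by apply Rmin_l.
    assert (Rmin (delta / 2) (b / 2) <= b / 2) by apply Rmin_r.
    unfold a. split; [apply Rmin_pos|]; lra. }
  assert (hphia : phi a < s).
  { specialize (hsmall a ltac:(lra)). apply Rabs_def2 in hsmall. lra. }
  destruct (ivt_strict phi a b s) as [y [hy hphiy]]; try lra.
  - intros u hu. apply hcont. lra.
  - exists y. split; [lra | exact hphiy].
Qed.

Definition tail_integral (f : R -> R) (a : R) : R := RInt (fun u => / f u) a 1.

Section ReciprocalIntegral.

Variable f : R -> R.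
Hypothesis hfpos : forall x, 0 < x -> 0 < f x.
Hypothesis hfcont : forall x, 0 < x -> continuity_pt f x.

Lemma recip_continuous (x : R) : 0 < x -> continuous (fun u => / f u) x.
Proof.
  intros hx. apply continuity_pt_filterlim.
  apply (continuity_pt_inv f x); [auto | specialize (hfpos x hx); lra].
Qed.

Lemma recip_ex_RInt (a b : R) : 0 < a -> 0 < b -> ex_RInt (fun u => / f u) a b.
Proof.
  intros ha hb. apply (ex_RInt_continuous (V := R_CompleteNormedModule)).
  intros z [hz _].
  apply recip_continuous. assert (0 < Rmin a b) by (apply Rmin_pos; auto). lra.
Qed.

Lemma recip_RInt_lower (a b M : R) :
  0 < a -> a <= b -> (forall u, a <= u <= b -> f u <= M) ->
  (b - a) / M <= RInt (fun u => / f u) a b.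
Proof.
  intros ha hab hM.
  assert (hMpos : 0 < M) by (specialize (hfpos a ha); specialize (hM a ltac:(lra)); lra).
  replace ((b - a) / M) with (RInt (fun _ => / M) a b)
    by (rewrite RInt_const; reflexivity).
  apply RInt_le; auto.
  - apply ex_RInt_const.
  - apply recip_ex_RInt; lra.
  - intros u hu. apply Rinv_le_contravar; [apply hfpos; lra | apply hM; lra].
Qed.

Lemma recip_RInt_nonneg (a b : R) :
  0 < a -> a <= b -> 0 <= RInt (fun u => / f u) a b.
Proof.
  intros ha hab. apply RInt_ge_0; auto.
  - apply recip_ex_RInt; lra.
  - intros u hu. left. apply Rinv_0_lt_compat, hfpos. lra.
Qed.

Lemma tail_chasles (a b : R) :
  0 < a -> 0 < b ->
  tail_integral f a = RInt (fun u => / f u) a b + tail_integral f b.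
Proof.
  intros ha hb. unfold tail_integral. symmetry.
  apply (RInt_Chasles (fun u => / f u) a b 1); apply recip_ex_RInt; lra.
Qed.

Lemma tail_antitone (a b : R) :
  0 < a -> a <= b -> tail_integral f b <= tail_integral f a.
Proof.
  intros ha hab. rewrite (tail_chasles a b) by lra.
  assert (0 <= RInt (fun u => / f u) a b) by (apply recip_RInt_nonneg; lra). lra.
Qed.

Lemma RInt_le_tail (a b : R) :
  0 < a -> a <= b -> b <= 1 -> RInt (fun u => / f u) a b <= tail_integral f a.
Proof.
  intros ha hab hb1. rewrite (tail_chasles a b) by lra.
  assert (0 <= tail_integral f b) by (apply recip_RInt_nonneg; lra). lra.
Qed.

(* F is differentiable on (0, oo) with F' = -1/f, hence continuous. *)
Lemma tail_continuous (x : R) : 0 < x -> continuity_pt (tail_integral f) x.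
Proof.
  intros hx. apply continuity_pt_filterlim, (ex_derive_continuous (tail_integral f) x).
  eexists. apply (is_derive_RInt' (fun u => / f u) (tail_integral f) x 1).
  - exists (mkposreal (x / 2) ltac:(lra)). intros y hy.
    change (Rabs (y - x) < x / 2) in hy. apply Rabs_def2 in hy.
    apply (RInt_correct (fun u => / f u)), recip_ex_RInt; lra.
  - exact (recip_continuous x hx).
Qed.

Lemma tail_attains (a t : R) :
  0 < a -> a <= 1 -> 0 < t < tail_integral f a ->
  exists x, a <= x <= 1 /\ tail_integral f x = t.
Proof.
  intros ha ha1 ht.
  assert (hone : tail_integral f 1 = 0) by exact (RInt_point 1 _).
  assert (a <> 1) by (intros ->; lra).
  destruct (ivt_strict (fun u => - tail_integral f u) a 1 (- t))
    as [x [hx hFx]]; try lra.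
  - intros u hu. apply (continuity_pt_opp (tail_integral f)), tail_continuous. lra.
  - exists x. split; [exact hx | lra].
Qed.

Lemma is_F_tail (F : R -> R) :
  is_F f F -> forall x, 0 < x -> F x = tail_integral f x.
Proof.
  intros hF x hx. destruct (hF x hx) as [pr ->].
  symmetry. apply RInt_Reals.
Qed.

End ReciprocalIntegral.

Lemma Rpower_half_lt (beta : R) : 1 < beta -> 0 < Rpower (/ 2) beta < / 2.
Proof.
  intros hbeta. unfold Rpower. split; [apply exp_pos|].
  assert (ln (/ 2) < 0) by (rewrite <- ln_1; apply ln_increasing; lra).
  rewrite <- (exp_ln (/ 2)) at 2 by lra. apply exp_increasing. nra.
Qed.

Lemma RV0_halving (f : R -> R) (beta : R) :
  1 < beta -> RV0 f beta ->
  exists c d, 0 < c /\ 0 < d /\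
    forall z, 0 < z < d -> c * f z <= f (/ 2 * z) <= / 2 * f z.
Proof.
  intros hbeta [hfpos hRV].
  destruct (Rpower_half_lt beta hbeta) as [hr0 hr1].
  set (r := Rpower (/ 2) beta) in *.
  assert (Rmin (r / 2) (/ 2 - r) <= r / 2) by apply Rmin_l.
  assert (Rmin (r / 2) (/ 2 - r) <= / 2 - r) by apply Rmin_r.
  destruct (hRV (/ 2) ltac:(lra) (Rmin (r / 2) (/ 2 - r))) as [d [hd hnear]].
  { apply Rmin_pos; lra. }
  exists (r / 2), d. split; [lra | split; [exact hd|]].
  intros z hz. specialize (hnear z hz). fold r in hnear.
  apply Rabs_lt_between' in hnear.
  assert (hfz := hfpos z ltac:(lra)).
  replace (f (/ 2 * z)) with (f (/ 2 * z) / f z * f z) by (field; lra).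
  split; apply Rmult_le_compat_r; lra.
Qed.

Lemma half_pow_bounds (k : nat) : 0 < (/ 2) ^ k <= 1.
Proof. induction k; simpl; lra. Qed.

Lemma halving_iterate (f : R -> R) (c d : R) :
  (forall x, 0 < x -> 0 < f x) -> 0 < c ->
  (forall z, 0 < z < d -> c * f z <= f (/ 2 * z) <= / 2 * f z) ->
  forall y, 0 < y < d -> forall k,
    c ^ k * f y <= f ((/ 2) ^ k * y) <= (/ 2) ^ k * f y.
Proof.
  intros hfpos hc hhalf y hy k. induction k as [|k IH].
  - simpl. rewrite !Rmult_1_l. lra.
  - destruct (half_pow_bounds k) as [hk0 hk1].
    assert (0 < c ^ k) by (apply pow_lt; lra).
    destruct (hhalf ((/ 2) ^ k * y) ltac:(split; nra)) as [hlow hup].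
    simpl. rewrite !Rmult_assoc. split; nra.
Qed.

Lemma asymptotic_bounds (f phi : R -> R) :
  (forall x, 0 < x -> 0 < phi x) -> lim_0plus (fun x => f x / phi x) 1 ->
  exists d, 0 < d /\ forall u, 0 < u < d -> phi u / 2 < f u < 3 / 2 * phi u.
Proof.
  intros hphipos hlim. destruct (hlim (/ 2) ltac:(lra)) as [d [hd hnear]].
  exists d. split; [exact hd|]. intros u hu.
  specialize (hnear u hu). apply Rabs_lt_between' in hnear.
  assert (hphiu := hphipos u ltac:(lra)).
  replace (f u) with (f u / phi u * phi u) by (field; lra). nra.
Qed.

Lemma small_scale_control (f phi : R -> R) (beta : R) :
  1 < beta -> RV0 f beta -> (forall x, 0 < x -> 0 < phi x) ->
  lim_0plus (fun x => f x / phi x) 1 ->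
  exists c d, 0 < c /\ 0 < d <= 1 /\
    (forall z, 0 < z < d -> c * f z <= f (/ 2 * z) <= / 2 * f z) /\
    (forall u, 0 < u < d -> phi u / 2 < f u < 3 / 2 * phi u).
Proof.
  intros hbeta hfRV hphipos hfphi.
  destruct (RV0_halving f beta hbeta hfRV) as (c & d1 & hc & hd1 & hhalf).
  destruct (asymptotic_bounds f phi hphipos hfphi) as (d2 & hd2 & hcomp).
  assert (Rmin d1 d2 <= d1) by apply Rmin_l.
  assert (Rmin d1 d2 <= d2) by apply Rmin_r.
  assert (Rmin 1 (Rmin d1 d2) <= 1) by apply Rmin_l.
  assert (Rmin 1 (Rmin d1 d2) <= Rmin d1 d2) by apply Rmin_r.
  exists c, (Rmin 1 (Rmin d1 d2)). split; [exact hc|]. split; [|split].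
  - split; [repeat apply Rmin_pos|]; lra.
  - intros z hz. apply hhalf. lra.
  - intros u hu. apply hcomp. lra.
Qed.

Section DyadicEstimate.

Variables (f phi : R -> R) (c d : R).
Hypothesis hfpos : forall x, 0 < x -> 0 < f x.
Hypothesis hfcont : forall x, 0 < x -> continuity_pt f x.
Hypothesis hphiinc : forall x y, 0 < x -> x < y -> phi x < phi y.
Hypothesis hc : 0 < c.
Hypothesis hd : 0 < d <= 1.
Hypothesis hhalf : forall z, 0 < z < d -> c * f z <= f (/ 2 * z) <= / 2 * f z.
Hypothesis hcomp : forall u, 0 < u < d -> phi u / 2 < f u < 3 / 2 * phi u.

(* Being comparable with an increasing function, f is quasi-increasing. *)
Lemma quasi_increasing (u z : R) : 0 < u -> u <= z -> z < d -> f u <= 3 * f z.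
Proof.
  intros hu huz hz.
  assert (phi u <= phi z) by (destruct huz as [huz | ->]; [left; apply hphiinc|]; lra).
  destruct (hcomp u ltac:(lra)). destruct (hcomp z ltac:(lra)). lra.
Qed.

(* Each dyadic block below y carries at least y / (6 f y) of the integral. *)
Lemma dyadic_lower (y : R) (K : nat) :
  0 < y < d ->
  INR K * (y / (6 * f y)) <= RInt (fun u => / f u) ((/ 2) ^ K * y) y.
Proof.
  intros hy. induction K as [|K IH].
  - assert (RInt (fun u => / f u) y y = 0) by exact (RInt_point y _).
    simpl. rewrite Rmult_1_l. lra.
  - destruct (half_pow_bounds K) as [hk0 hk1].
    set (p := (/ 2) ^ K * y) in *.
    assert (hp : 0 < p <= y) by (unfold p; split; nra).
    assert (hfy := hfpos y ltac:(lra)).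
    assert (hblock : y / (6 * f y) <= RInt (fun u => / f u) (/ 2 * p) p).
    { eapply Rle_trans;
        [| apply (recip_RInt_lower f hfpos hfcont (/ 2 * p) p (3 * ((/ 2) ^ K * f y)))].
      - right. unfold p. field. split; lra.
      - lra.
      - lra.
      - intros u hu.
        assert (f u <= 3 * f p) by (apply quasi_increasing; lra).
        destruct (halving_iterate f c d hfpos hc hhalf y hy K) as [_ hup].
        fold p in hup. lra. }
    replace ((/ 2) ^ S K * y) with (/ 2 * p) by (unfold p; simpl; ring).
    assert (hsplit : RInt (fun u => / f u) (/ 2 * p) y
                     = RInt (fun u => / f u) (/ 2 * p) p + RInt (fun u => / f u) p y).
    { symmetry. apply (RInt_Chasles (fun u => / f u)); apply recip_ex_RInt; auto; lra. }
    rewrite hsplit, S_INR, Rmult_plus_distr_r, Rmult_1_l. lra.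
Qed.

Lemma tail_hits (t : R) :
  0 < t -> tail_integral f d < t -> exists x, 0 < x < d /\ tail_integral f x = t.
Proof.
  intros ht htd. set (z := d / 2).
  assert (hz : 0 < z < d) by (unfold z; lra).
  assert (hfz := hfpos z ltac:(lra)).
  set (C := z / (6 * f z)).
  assert (hC : 0 < C) by (unfold C; apply Rdiv_lt_0_compat; lra).
  destruct (INR_unbounded (t / C)) as [j hj].
  destruct (half_pow_bounds j) as [hj0 hj1].
  set (a := (/ 2) ^ j * z).
  assert (ha : 0 < a <= z) by (unfold a; split; nra).
  assert (t < tail_integral f a).
  { assert (t < INR j * C) by (apply Rdiv_lt_iff; auto).
    assert (INR j * C <= RInt (fun u => / f u) a z) by apply dyadic_lower, hz.
    assert (RInt (fun u => / f u) a z <= tail_integral f a)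
      by (apply RInt_le_tail; auto; lra).
    lra. }
  destruct (tail_attains f hfpos hfcont a t) as [x [hx hFx]]; try lra.
  exists x. split; [split | exact hFx]; [lra|].
  destruct (Rlt_le_dec x d) as [hxd | hxd]; [exact hxd | exfalso].
  assert (tail_integral f x <= tail_integral f d) by (apply tail_antitone; auto; lra).
  lra.
Qed.

Lemma argument_below_dyadic (x y : R) (K : nat) :
  0 < x < d -> 0 < y < d -> f x < c ^ K / 6 * phi y -> x < (/ 2) ^ K * y.
Proof.
  intros hx hy hfx.
  destruct (half_pow_bounds K) as [hk0 hk1].
  destruct (Rlt_le_dec x ((/ 2) ^ K * y)) as [hlt | hge]; [exact hlt | exfalso].
  assert (f ((/ 2) ^ K * y) <= 3 * f x) by (apply quasi_increasing; nra).
  destruct (halving_iterate f c d hfpos hc hhalf y hy K) as [hiter _].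
  destruct (hcomp y hy).
  assert (0 < c ^ K) by (apply pow_lt; lra).
  nra.
Qed.

Lemma key_estimate (x y : R) (K : nat) :
  0 < x < d -> 0 < y < d -> f x < c ^ K / 6 * phi y ->
  INR K * y <= 9 * phi y * tail_integral f x.
Proof.
  intros hx hy hfx.
  assert (hxp := argument_below_dyadic x y K hx hy hfx).
  destruct (half_pow_bounds K) as [hk0 hk1].
  assert (hsum := dyadic_lower y K hy).
  assert (tail_integral f ((/ 2) ^ K * y) <= tail_integral f x)
    by (apply tail_antitone; auto; lra).
  assert (RInt (fun u => / f u) ((/ 2) ^ K * y) y <= tail_integral f ((/ 2) ^ K * y))
    by (apply RInt_le_tail; auto; nra).
  assert (hfy := hfpos y ltac:(lra)).
  destruct (hcomp y hy).
  set (A := INR K * (y / (6 * f y))) in *.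
  assert (hA : 0 <= A).
  { apply Rmult_le_pos; [apply pos_INR | apply Rdiv_le_0_compat; lra]. }
  replace (INR K * y) with (6 * f y * A) by (unfold A; field; lra).
  assert (A <= tail_integral f x) by lra.
  apply Rle_trans with (9 * phi y * A); nra.
Qed.

End DyadicEstimate.

Theorem mainTheorem11
  (f F Finv phi phiinv gamma : R -> R) (beta theta : R)
  (hfpos : forall x, 0 < x -> 0 < f x)
  (hfcont : forall x, 0 < x -> continuity_pt f x)
  (hbeta : 1 < beta)
  (hfRV : RV0 f beta)
  (hF : is_F f F)
  (hFinv : forall x, 0 < x -> Finv (F x) = x)
  (hphipos : forall x, 0 < x -> 0 < phi x)
  (hphicont : forall x, 0 < x -> continuity_pt phi x)
  (hphiinc : forall x y, 0 < x -> x < y -> phi x < phi y)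
  (hphi0 : lim_0plus phi 0)
  (hphiinv : forall x, 0 < x -> phiinv (phi x) = x)
  (hfphi : lim_0plus (fun x => f x / phi x) 1)
  (htheta : 0 < theta)
  (hgpos : forall t, 0 < t -> 0 < gamma t)
  (hgcont : forall t, 0 < t -> continuity_pt gamma t)
  (hgdec : forall s t, 0 < s -> s < t -> gamma t < gamma s)
  (hgRV : RVinf gamma (- theta))
  (hg0 : lim_infty gamma 0)
  (hlim : lim_infty (fun t => f (Finv t) / gamma t) 0) :
  lim_infty (fun t => phiinv (gamma t) / (t * gamma t)) 0.
Proof.
  destruct (small_scale_control f phi beta hbeta hfRV hphipos hfphi)
    as (c & d & hc & hd & hhalf & hcomp).
  intros eps heps.
  destruct (INR_unbounded (9 / eps)) as [K hK].
  assert (0 < c ^ K / 6) by (assert (0 < c ^ K) by (apply pow_lt; lra); lra).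
  destruct (lim_infty_0_eventually_lt gamma (phi (d / 2)) hg0) as [M1 hM1];
    [apply hphipos; lra|].
  destruct (lim_infty_0_eventually_lt _ (c ^ K / 6) hlim) as [M2 hM2]; auto.
  exists (Rmax M1 (Rmax M2 (Rmax (tail_integral f d) 0))).
  intros t ht. rewrite !Rmax_Rlt in ht.
  destruct ht as (htM1 & htM2 & htd & ht0).
  assert (hgt := hgpos t ht0).
  destruct (tail_hits f phi c d hfpos hfcont hphiinc hc hd hhalf hcomp t ht0 htd)
    as (x & hx & hFx).
  assert (hFinvt : Finv t = x).
  { rewrite <- hFx, <- (is_F_tail f F hF x) by lra. apply hFinv. lra. }
  destruct (small_values_attained phi (d / 2) (gamma t) hphicont hphi0)
    as (y & hy & hphiy); [lra | split; auto|].
  assert (hfx : f x < c ^ K / 6 * phi y).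
  { rewrite hphiy, <- hFinvt. apply Rdiv_lt_iff; auto. }
  assert (hkey := key_estimate f phi c d hfpos hfcont hphiinc hc hd hhalf hcomp
                    x y K ltac:(lra) ltac:(lra) hfx).
  rewrite hphiy, hFx in hkey.
  (* Hence phi^-1(gamma t) / (t gamma t) = y / (t gamma t) <= 9 / K < eps. *)
  rewrite <- hphiy, hphiinv, hphiy, Rminus_0_r by lra.
  assert (9 < INR K * eps) by (apply Rdiv_lt_iff; auto).
  rewrite Rabs_pos_eq by (apply Rdiv_le_0_compat; nra).
  apply Rdiv_lt_iff; nra.
Qed.
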